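(* Let $N\ge 2$ be an integer. Define $A,B:\mathbb{R}^2\to\mathbb{R}^2$ by $B=0$ (the zero operator) and $A(x_1,x_2)=\left(-\tfrac{x_2}{\sqrt{N-1}},\ \tfrac{x_1}{\sqrt{N-1}}\right)$. Then $A$ and $B$ are maximally monotone, $B$ is $\beta$-cocoercive for every $\beta>0$, and for the Douglas–Rachford splitting iteration with stepsize $\gamma=1$ and relaxation $\lambda=1$, the DR operator $T$ has unique fixed point $w^\star=0$ and for every initial point $w^1\in\mathbb{R}^2$, $$\|Tw^N-w^N\|^2=\frac{(N-1)^{N-1}}{N^N}\,\|w^1-w^\star\|^2 .$$
   Context: For a maximally monotone operator $M$, $J_M=(I+M)^{-1}$ and $R_M=2J_M-I$. For maximally monotone $A,B$, $\gamma>0$, $\lambda\in(0,2)$, the DR operator is $T=(1-\tfrac{\lambda}{2})I+\tfrac{\lambda}{2}R_{\gamma A}R_{\gamma B}$, and the DRS iteration is $x^k=J_{\gamma B}(w^k)$, $y^k=J_{\gamma A}(2x^k-w^k)$, $w^{k+1}=w^k+\lambda(y^k-x^k)=Tw^k$. An operator $M$ is $\beta$-cocoercive ($\beta>0$) if $\langle u-v,x-y\rangle\ge\beta\|u-v\|^2$ for all $(x,u),(y,v)$ in the graph of $M$. *)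

From Stdlib Require Import Reals Lra ClassicalEpsilon.
Open Scope R_scope.

Definition V : Type := (R * R)%type.
Definition vzero : V := (0, 0).
Definition vadd (a b : V) : V := (fst a + fst b, snd a + snd b).
Definition vscale (c : R) (a : V) : V := (c * fst a, c * snd a).
Definition vsub (a b : V) : V := (fst a - fst b, snd a - snd b).
Definition inner (a b : V) : R := fst a * fst b + snd a * snd b.
Definition norm2 (a : V) : R := inner a a.

(* A (set-valued) operator on V is given by its graph: M x u means u ∈ M x. *)
Definition op : Type := V -> V -> Prop.

Definition graph_of (f : V -> V) : op := fun x u => u = f x.

Definition monotone (M : op) : Prop :=
  forall x u y v, M x u -> M y v -> 0 <= inner (vsub u v) (vsub x y).

Definition maximally_monotone (M : op) : Prop :=
  monotone M /\
  forall x u, (forall y v, M y v -> 0 <= inner (vsub u v) (vsub x y)) -> M x u.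

Definition cocoercive (beta : R) (M : op) : Prop :=
  0 < beta /\
  forall x u y v, M x u -> M y v ->
    beta * norm2 (vsub u v) <= inner (vsub u v) (vsub x y).

Definition op_scale (g : R) (M : op) : op :=
  fun x u => exists a, M x a /\ u = vscale g a.

(* Resolvent J_M = (I + M)^{-1}: J_M w is a point x with w ∈ x + M x
   (single-valued and everywhere defined for maximally monotone M, by Minty). *)
Definition resolvent (M : op) (w : V) : V :=
  epsilon (inhabits vzero) (fun x => M x (vsub w x)).

Definition reflected (M : op) (w : V) : V :=
  vsub (vscale 2 (resolvent M w)) w.

Definition DR_op (A B : op) (gamma lambda : R) (w : V) : V :=
  vadd (vscale (1 - lambda / 2) w)
       (vscale (lambda / 2) (reflected (op_scale gamma A)
                                       (reflected (op_scale gamma B) w))).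

(* DRS iterates w^k, k >= 1: w^1 given, w^{k+1} = T w^k. *)
Definition DRS_iterate (A B : op) (gamma lambda : R) (w1 : V) (k : nat) : V :=
  Nat.iter (k - 1) (DR_op A B gamma lambda) w1.

Definition A_ex (N : nat) : op :=
  graph_of (fun x => (- snd x / sqrt (INR N - 1), fst x / sqrt (INR N - 1))).
Definition B_ex : op := graph_of (fun _ => vzero).

(* With B = 0 and lambda = 1 the reflection R_{gamma B} is the identity, so the
   DR operator collapses to the resolvent of A.  For the skew map A of slope a
   this resolvent is a rotation composed with the contraction by
   sqrt (1 + a^2), hence ||T w - w||^2 = a^2/(1+a^2) ||w||^2 and each step
   multiplies ||w||^2 by 1/(1+a^2).  With a^2 = 1/(N-1) these factors are 1/N
   and (N-1)/N. *)

From Stdlib Require Import Reals Lra Lia ClassicalEpsilon FunctionalExtensionality.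
Open Scope R_scope.

Lemma resolvent_unique (M : op) (w x : V) :
  M x (vsub w x) -> (forall y, M y (vsub w y) -> y = x) -> resolvent M w = x.
Proof.
  intros Hx Huniq; apply Huniq; unfold resolvent.
  apply epsilon_spec; exists x; exact Hx.
Qed.

Lemma vsub_vzero_r (w : V) : vsub w vzero = w.
Proof. destruct w; unfold vsub, vzero; simpl; f_equal; ring. Qed.

Lemma zero_op_maximally_monotone : maximally_monotone B_ex.
Proof.
  split.
  - intros x u y v -> ->; unfold inner, vsub, vzero; simpl; lra.
  - intros [x1 x2] [u1 u2] Hmon; unfold B_ex, graph_of, vzero.
    specialize (Hmon (x1 + u1, x2 + u2) _ eq_refl).
    unfold inner, vsub, vzero in Hmon; simpl in Hmon; f_equal; nra.
Qed.

Lemma zero_op_cocoercive (beta : R) : 0 < beta -> cocoercive beta B_ex.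
Proof.
  intros Hbeta; split; [exact Hbeta|].
  intros [x1 x2] u [y1 y2] v -> ->; unfold norm2, inner, vsub, vzero; simpl; lra.
Qed.

Lemma resolvent_zero_op (g : R) (w : V) : resolvent (op_scale g B_ex) w = w.
Proof.
  apply resolvent_unique.
  - exists vzero; split; [reflexivity|].
    destruct w; unfold vsub, vscale, vzero; simpl; f_equal; ring.
  - intros [y1 y2] [b [-> Hy]]; destruct w as [w1 w2].
    unfold vsub, vscale, vzero in Hy; simpl in Hy.
    injection Hy; intros; f_equal; lra.
Qed.

Lemma DR_op_zero_right (A : op) (g : R) (w : V) :
  DR_op A B_ex g 1 w = resolvent (op_scale g A) w.
Proof.
  unfold DR_op, reflected; rewrite resolvent_zero_op.
  replace (vsub (vscale 2 w) w) with w
    by (destruct w; unfold vsub, vscale; simpl; f_equal; ring).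
  destruct (resolvent (op_scale g A) w), w.
  unfold vadd, vsub, vscale; simpl; f_equal; field.
Qed.

Section Skew.

Variable a : R.

Definition skew (x : V) : V := (- snd x * a, fst x * a).

Definition skew_resolvent (w : V) : V :=
  ((fst w + a * snd w) / (1 + a ^ 2), (snd w - a * fst w) / (1 + a ^ 2)).

Let denom_pos : 0 < 1 + a ^ 2.
Proof. nra. Qed.

Lemma skew_maximally_monotone : maximally_monotone (graph_of skew).
Proof.
  split.
  - intros [x1 x2] u [y1 y2] v -> ->; unfold inner, vsub, skew; simpl; nra.
  - intros [x1 x2] [u1 u2] Hmon; unfold graph_of, skew; simpl.
    set (c1 := u1 + x2 * a); set (c2 := u2 - x1 * a).
    specialize (Hmon (x1 + c1, x2 + c2) _ eq_refl).
    unfold inner, vsub, skew in Hmon; simpl in Hmon.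
    (* testing against x + (u - skew x) gives 0 <= - ||u - skew x||^2 *)
    replace (_ + _) with (- (c1 * c1 + c2 * c2)) in Hmon by (unfold c1, c2; ring).
    assert (c1 = 0 /\ c2 = 0) as [Hc1 Hc2] by (clearbody c1 c2; split; nra).
    unfold c1, c2 in Hc1, Hc2; f_equal; lra.
Qed.

Lemma resolvent_skew (w : V) :
  resolvent (op_scale 1 (graph_of skew)) w = skew_resolvent w.
Proof.
  apply resolvent_unique; destruct w as [w1 w2].
  - eexists; split; [reflexivity|].
    unfold skew_resolvent, skew, vsub, vscale; simpl; f_equal; field; lra.
  - intros [y1 y2] [b [-> Hy]].
    unfold skew, vsub, vscale in Hy; simpl in Hy.
    injection Hy; intros e2 e1.
    assert (E1 : y1 * (1 + a ^ 2) = w1 + a * w2) by nra.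
    assert (E2 : y2 * (1 + a ^ 2) = w2 - a * w1) by nra.
    unfold skew_resolvent; simpl.
    f_equal; [rewrite <- E1 | rewrite <- E2]; field; lra.
Qed.

Lemma norm2_skew_resolvent (w : V) :
  norm2 (skew_resolvent w) = norm2 w / (1 + a ^ 2).
Proof. destruct w; unfold norm2, inner, skew_resolvent; simpl; field; lra. Qed.

Lemma norm2_skew_resolvent_step (w : V) :
  norm2 (vsub (skew_resolvent w) w) = a ^ 2 / (1 + a ^ 2) * norm2 w.
Proof. destruct w; unfold norm2, inner, skew_resolvent, vsub; simpl; field; lra. Qed.

Lemma norm2_iter_skew_resolvent (k : nat) (w : V) :
  norm2 (Nat.iter k skew_resolvent w) = (/ (1 + a ^ 2)) ^ k * norm2 w.
Proof.
  induction k as [|k IH]; [simpl; ring|].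
  change (Nat.iter (S k) skew_resolvent w)
    with (skew_resolvent (Nat.iter k skew_resolvent w)).
  rewrite norm2_skew_resolvent, IH; simpl pow; field; lra.
Qed.

Lemma skew_resolvent_fixed_point (w : V) :
  a <> 0 -> skew_resolvent w = w -> w = vzero.
Proof.
  intros Ha Hfix.
  assert (Hstep : a ^ 2 / (1 + a ^ 2) * norm2 w = 0).
  { rewrite <- norm2_skew_resolvent_step, Hfix.
    destruct w; unfold norm2, inner, vsub; simpl; ring. }
  assert (Hcoef : a ^ 2 / (1 + a ^ 2) <> 0).
  { assert (0 < a ^ 2) by nra.
    apply Rgt_not_eq, Rdiv_lt_0_compat; lra. }
  destruct (Rmult_integral _ _ Hstep) as [|Hw]; [contradiction|].
  destruct w as [w1 w2]; unfold norm2, inner in Hw; simpl in Hw.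
  unfold vzero; f_equal; nra.
Qed.

End Skew.

Lemma A_ex_skew (N : nat) : A_ex N = graph_of (skew (/ sqrt (INR N - 1))).
Proof. reflexivity. Qed.

Lemma DR_op_example (N : nat) (w : V) :
  DR_op (A_ex N) B_ex 1 1 w = skew_resolvent (/ sqrt (INR N - 1)) w.
Proof. rewrite DR_op_zero_right, A_ex_skew; apply resolvent_skew. Qed.

Lemma inv_sqrt_sqr (n : R) : 0 < n -> (/ sqrt n) ^ 2 = / n.
Proof.
  intros Hn; rewrite pow_inv, <- Rsqr_pow2, Rsqr_sqrt; lra.
Qed.

Lemma contraction_factors (N : nat) : (2 <= N)%nat ->
  let a := / sqrt (INR N - 1) in
  a ^ 2 / (1 + a ^ 2) * (/ (1 + a ^ 2)) ^ (N - 1)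
  = (INR N - 1) ^ (N - 1) / INR N ^ N.
Proof.
  intros HN a.
  assert (Hn : 1 < INR N) by (apply (lt_INR 1); lia).
  unfold a; rewrite inv_sqrt_sqr by lra.
  replace (/ (1 + / (INR N - 1))) with ((INR N - 1) / INR N) by (field; lra).
  destruct N as [|k]; [lia|]; replace (S k - 1)%nat with k by lia.
  set (n := INR (S k)) in *.
  unfold Rdiv; rewrite Rpow_mult_distr, pow_inv; simpl pow.
  field; split; [apply pow_nonzero|]; lra.
Qed.

Theorem mainTheorem3 (N : nat) (HN : (2 <= N)%nat) :
  maximally_monotone (A_ex N) /\
  maximally_monotone B_ex /\
  (forall beta : R, 0 < beta -> cocoercive beta B_ex) /\
  (DR_op (A_ex N) B_ex 1 1 vzero = vzero /\
   forall w : V, DR_op (A_ex N) B_ex 1 1 w = w -> w = vzero) /\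
  (forall w1 : V,
     let wN := DRS_iterate (A_ex N) B_ex 1 1 w1 N in
     norm2 (vsub (DR_op (A_ex N) B_ex 1 1 wN) wN)
     = ((INR N - 1) ^ (N - 1) / INR N ^ N) * norm2 (vsub w1 vzero)).
Proof.
  set (a := / sqrt (INR N - 1)).
  assert (Ha : a <> 0).
  { apply Rinv_neq_0_compat, Rgt_not_eq, sqrt_lt_R0.
    assert (1 < INR N) by (apply (lt_INR 1); lia); lra. }
  assert (HT : DR_op (A_ex N) B_ex 1 1 = skew_resolvent a).
  { extensionality w; apply DR_op_example. }
  split; [rewrite A_ex_skew; apply skew_maximally_monotone|].
  split; [exact zero_op_maximally_monotone|].
  split; [exact zero_op_cocoercive|].
  rewrite HT; split; [split|].
  - unfold skew_resolvent, vzero; simpl; f_equal; field; nra.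
  - intros w; apply skew_resolvent_fixed_point, Ha.
  - intros w1; simpl; unfold DRS_iterate; rewrite HT.
    rewrite norm2_skew_resolvent_step, norm2_iter_skew_resolvent, vsub_vzero_r.
    rewrite <- (contraction_factors N HN); fold a; ring.
Qed.
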